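(* If $f_i=h_i+\overline{g_i}\in S_H$ with $h_i(z)+g_i(z)=\dfrac{z}{1-z}$ for $i=1,2$, then for every $0\le t\le1$ the map $f=tf_1+(1-t)f_2$ belongs to $S_H$ and maps $E$ onto a domain convex in the direction of the imaginary axis.
   Context: $E=\{z\in\mathbb{C}:|z|<1\}$. $S_H$ denotes the class of harmonic, univalent, sense-preserving mappings $f=h+\overline{g}$ of $E$ ($h,g$ analytic, $h'\ne0$, $|g'/h'|<1$) normalized by $f(0)=0$, $f_z(0)=1$. A domain $\Omega$ is convex in the direction of the imaginary axis if every line parallel to the imaginary axis has connected or empty intersection with $\Omega$. *)

From Stdlib Require Import Reals Lra.
Open Scope R_scope.

Definition Cpx : Type := (R * R)%type.
Definition Re (z : Cpx) : R := fst z.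
Definition Im (z : Cpx) : R := snd z.
Definition RtoC (x : R) : Cpx := (x, 0).
Definition Czero : Cpx := (0, 0).
Definition Cone : Cpx := (1, 0).
Definition Cadd (z w : Cpx) : Cpx := (fst z + fst w, snd z + snd w).
Definition Copp (z : Cpx) : Cpx := (- fst z, - snd z).
Definition Csub (z w : Cpx) : Cpx := Cadd z (Copp w).
Definition Cmul (z w : Cpx) : Cpx :=
  (fst z * fst w - snd z * snd w, fst z * snd w + snd z * fst w).
Definition Cconj (z : Cpx) : Cpx := (fst z, - snd z).
Definition Cnorm (z : Cpx) : R := sqrt (fst z * fst z + snd z * snd z).
Definition Cinv (z : Cpx) : Cpx :=
  let d := fst z * fst z + snd z * snd z in (fst z / d, - snd z / d).
Definition Cdiv (z w : Cpx) : Cpx := Cmul z (Cinv w).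

Definition inE (z : Cpx) : Prop := Cnorm z < 1.

Definition Cderiv_at (f : Cpx -> Cpx) (z l : Cpx) : Prop :=
  forall eps : R, 0 < eps -> exists delta : R, 0 < delta /\
    forall w : Cpx, 0 < Cnorm (Csub w z) < delta ->
      Cnorm (Csub (Cdiv (Csub (f w) (f z)) (Csub w z)) l) < eps.

(* Data (h, g) of a mapping f = h + conj g in S_H:
   h, g analytic in E (with derivatives h', g'), h' <> 0, |g'/h'| < 1,
   f univalent in E, f(0) = 0, f_z(0) = h'(0) = 1. *)
Definition SH_data (h g : Cpx -> Cpx) : Prop :=
  exists h' g' : Cpx -> Cpx,
    (forall z, inE z -> Cderiv_at h z (h' z) /\ Cderiv_at g z (g' z)) /\
    (forall z, inE z -> h' z <> Czero /\ Cnorm (Cdiv (g' z) (h' z)) < 1) /\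
    (forall z w, inE z -> inE w ->
       Cadd (h z) (Cconj (g z)) = Cadd (h w) (Cconj (g w)) -> z = w) /\
    Cadd (h Czero) (Cconj (g Czero)) = Czero /\
    h' Czero = Cone.

Definition in_SH (f : Cpx -> Cpx) : Prop :=
  exists h g : Cpx -> Cpx, SH_data h g /\
    forall z, inE z -> f z = Cadd (h z) (Cconj (g z)).

Definition Copen (U : Cpx -> Prop) : Prop :=
  forall z, U z -> exists r, 0 < r /\ forall w, Cnorm (Csub w z) < r -> U w.

Definition Cconnected (S : Cpx -> Prop) : Prop :=
  ~ exists U V : Cpx -> Prop, Copen U /\ Copen V /\
      (forall z, S z -> U z \/ V z) /\
      (exists z, S z /\ U z) /\ (exists z, S z /\ V z) /\
      (forall z, S z -> ~ (U z /\ V z)).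

Definition domain (S : Cpx -> Prop) : Prop := Copen S /\ Cconnected S.

Definition convex_imag_dir (S : Cpx -> Prop) : Prop :=
  forall c : R, Cconnected (fun w => S w /\ Re w = c).

Definition image_E (f : Cpx -> Cpx) : Cpx -> Prop :=
  fun w => exists z, inE z /\ w = f z.

(* Let phi(z) = z/(1-z), which maps E onto the half-plane Re w > -1/2; we
   parametrize E by [zeta c s], the preimage of w = (c, s).  If h and g are
   analytic in E with h' <> 0, |g'/h'| < 1 and h + g = phi ("shear data"),
   then along a vertical line of the half-plane h and g move with velocities
   a = h' V and b = g' V satisfying a + b = i, and |g'/h'| < 1 becomes the
   linear condition Im a > 1/2.  Hence:
   - shear data are closed under convex combination ([shear_data_comb]);
   - f = h + conj g satisfies f(zeta c s) = (c, Q c s) with Q strictly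
     increasing in s, so f is univalent and f(E) is swept out over the
     half-plane c > -1/2 by the vertical segments {c} x Q(c, R).
   Such a swept region is open, path connected and meets every vertical line
   in a segment ([swept_region_*]). *)

From Stdlib Require Import Reals Lra Psatz ClassicalEpsilon FunctionalExtensionality
  PropExtensionality.
From Coquelicot Require Import Coquelicot.
Open Scope R_scope.

Ltac cpx_ring :=
  unfold Csub, Cadd, Copp, Cmul, Cconj, RtoC, Czero, Cone;
  apply injective_projections; simpl; ring.

Lemma Cnorm_Cmod (z : Cpx) : Cnorm z = Cmod z.
Proof. unfold Cnorm, Cmod; f_equal; ring. Qed.

Lemma Cnorm_ge0 (z : Cpx) : 0 <= Cnorm z.
Proof. apply sqrt_pos. Qed.

Lemma Cnorm_mul (a b : Cpx) : Cnorm (Cmul a b) = Cnorm a * Cnorm b.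
Proof. rewrite !Cnorm_Cmod; exact (Cmod_mult a b). Qed.

Lemma Cnorm_add_le (a b : Cpx) : Cnorm (Cadd a b) <= Cnorm a + Cnorm b.
Proof. rewrite !Cnorm_Cmod; exact (Cmod_triangle a b). Qed.

Lemma Cnorm_RtoC (x : R) : Cnorm (RtoC x) = Rabs x.
Proof. rewrite Cnorm_Cmod; exact (Cmod_R x). Qed.

Lemma Rabs_fst_le (z : Cpx) : Rabs (fst z) <= Cnorm z.
Proof. rewrite Cnorm_Cmod; eapply Rle_trans; [apply Rmax_l | apply Rmax_Cmod]. Qed.

Lemma Rabs_snd_le (z : Cpx) : Rabs (snd z) <= Cnorm z.
Proof. rewrite Cnorm_Cmod; eapply Rle_trans; [apply Rmax_r | apply Rmax_Cmod]. Qed.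

Lemma Cnorm_le_abs (z : Cpx) : Cnorm z <= Rabs (fst z) + Rabs (snd z).
Proof.
  destruct z as [a b]; simpl.
  replace (a, b) with (Cadd (RtoC a) (Cmul (0, 1) (RtoC b))) by cpx_ring.
  eapply Rle_trans; [apply Cnorm_add_le|].
  rewrite Cnorm_mul, !Cnorm_RtoC.
  assert (Hi : Cnorm (0, 1) = 1).
  { unfold Cnorm; simpl; replace (0 * 0 + 1 * 1) with 1 by ring; apply sqrt_1. }
  rewrite Hi; lra.
Qed.

Lemma Cnorm_sq (z : Cpx) : Cnorm z * Cnorm z = fst z * fst z + snd z * snd z.
Proof. apply sqrt_sqrt; nra. Qed.

Lemma Cnorm_lt_iff (a b : Cpx) :
  Cnorm a < Cnorm b <-> fst a * fst a + snd a * snd a < fst b * fst b + snd b * snd b.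
Proof.
  rewrite <- !Cnorm_sq. pose proof (Cnorm_ge0 a); pose proof (Cnorm_ge0 b).
  split; intro; nra.
Qed.

Lemma Cnorm_pos (z : Cpx) : z <> Czero -> 0 < Cnorm z.
Proof. rewrite Cnorm_Cmod; apply Cmod_gt_0. Qed.

Lemma inE_iff (z : Cpx) : inE z <-> fst z * fst z + snd z * snd z < 1.
Proof.
  unfold inE. replace 1 with (Cnorm Cone) at 1 by (rewrite Cnorm_Cmod; exact Cmod_1).
  rewrite Cnorm_lt_iff; simpl; lra.
Qed.

Lemma Cdiv_mul (X Y W : Cpx) : Y <> Czero -> Cmul (Cdiv X Y) (Cmul Y W) = Cmul X W.
Proof.
  intro HY. pose proof (Cnorm_pos Y HY) as HYp.
  assert (HY2 : 0 < Cnorm Y * Cnorm Y) by nra. rewrite Cnorm_sq in HY2.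
  destruct X as [x1 x2], Y as [y1 y2], W as [w1 w2]; simpl in HY2.
  unfold Cdiv, Cmul, Cinv; simpl. f_equal; field; lra.
Qed.

Definition path_deriv (p : R -> Cpx) (x : R) (v : Cpx) : Prop :=
  forall e, 0 < e -> exists d, 0 < d /\ forall h, Rabs h < d ->
    Cnorm (Csub (Csub (p (x + h)) (p x)) (Cmul (RtoC h) v)) <= e * Rabs h.

Lemma derivable_pt_lim_o (u : R -> R) (x l : R) : derivable_pt_lim u x l ->
  forall e, 0 < e -> exists d, 0 < d /\
    forall h, Rabs h < d -> Rabs (u (x + h) - u x - l * h) <= e * Rabs h.
Proof.
  intros Hu e He. destruct (Hu e He) as [d Hd]. exists d; split; [apply cond_pos|].
  intros h Hh. destruct (Req_dec h 0) as [->|Hh0].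
  - rewrite Rplus_0_r, Rmult_0_r, Rminus_0_r, Rminus_diag, Rabs_R0; lra.
  - specialize (Hd h Hh0 Hh).
    replace (u (x + h) - u x - l * h) with (((u (x + h) - u x) / h - l) * h)
      by (field; auto).
    rewrite Rabs_mult. apply Rmult_le_compat_r; [apply Rabs_pos | lra].
Qed.

Lemma derivable_pt_lim_of_o (u : R -> R) (x l : R) :
  (forall e, 0 < e -> exists d, 0 < d /\
     forall h, Rabs h < d -> Rabs (u (x + h) - u x - l * h) <= e * Rabs h) ->
  derivable_pt_lim u x l.
Proof.
  intros Hu eps Heps. destruct (Hu (eps / 2)) as [d [Hd Hh]]; [lra|].
  exists (mkposreal d Hd). intros h Hh0 Hhd; simpl in Hhd.
  specialize (Hh h Hhd). assert (0 < Rabs h) by (apply Rabs_pos_lt; auto).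
  replace ((u (x + h) - u x) / h - l) with ((u (x + h) - u x - l * h) / h)
    by (field; auto).
  unfold Rdiv. rewrite Rabs_mult, Rabs_inv.
  apply Rle_lt_trans with (eps / 2 * Rabs h * / Rabs h).
  - apply Rmult_le_compat_r; [left; apply Rinv_0_lt_compat|]; auto.
  - field_simplify; lra.
Qed.

Lemma path_deriv_iff (p : R -> Cpx) (x : R) (v : Cpx) :
  path_deriv p x v <->
  derivable_pt_lim (fun y => fst (p y)) x (fst v) /\
  derivable_pt_lim (fun y => snd (p y)) x (snd v).
Proof.
  assert (Herr : forall h, Csub (Csub (p (x + h)) (p x)) (Cmul (RtoC h) v)
     = (fst (p (x + h)) - fst (p x) - fst v * h, snd (p (x + h)) - snd (p x) - snd v * h))
    by (intro h; cpx_ring).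
  split.
  - intro Hp. split; apply derivable_pt_lim_of_o; intros e He;
      destruct (Hp e He) as [d [Hd Hh]]; exists d; split; auto; intros h Hhd;
      specialize (Hh h Hhd); rewrite Herr in Hh.
    + pose proof (Rabs_fst_le (fst (p (x + h)) - fst (p x) - fst v * h,
                               snd (p (x + h)) - snd (p x) - snd v * h)); simpl in *; lra.
    + pose proof (Rabs_snd_le (fst (p (x + h)) - fst (p x) - fst v * h,
                               snd (p (x + h)) - snd (p x) - snd v * h)); simpl in *; lra.
  - intros [H1 H2] e He.
    destruct (derivable_pt_lim_o _ _ _ H1 (e / 2)) as [d1 [Hd1 B1]]; [lra|].
    destruct (derivable_pt_lim_o _ _ _ H2 (e / 2)) as [d2 [Hd2 B2]]; [lra|].
    exists (Rmin d1 d2); split; [apply Rmin_pos; auto|]. intros h Hh.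
    specialize (B1 h (Rlt_le_trans _ _ _ Hh (Rmin_l _ _))).
    specialize (B2 h (Rlt_le_trans _ _ _ Hh (Rmin_r _ _))).
    rewrite Herr. eapply Rle_trans; [apply Cnorm_le_abs|]; simpl; lra.
Qed.

Lemma path_deriv_ext (p q : R -> Cpx) (x : R) (v : Cpx) :
  (forall y, p y = q y) -> path_deriv p x v -> path_deriv q x v.
Proof.
  intros E Hp e He. destruct (Hp e He) as [d [Hd Hh]].
  exists d; split; auto; intros h; rewrite <- !E; auto.
Qed.

Lemma path_deriv_unique (p : R -> Cpx) (x : R) (v w : Cpx) :
  path_deriv p x v -> path_deriv p x w -> v = w.
Proof.
  rewrite !path_deriv_iff; intros [V1 V2] [W1 W2].
  apply injective_projections; eapply uniqueness_limite; eauto.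
Qed.

Lemma path_deriv_add (p q : R -> Cpx) (x : R) (v w : Cpx) :
  path_deriv p x v -> path_deriv q x w ->
  path_deriv (fun y => Cadd (p y) (q y)) x (Cadd v w).
Proof.
  rewrite !path_deriv_iff; intros [V1 V2] [W1 W2]; simpl.
  split; now apply derivable_pt_lim_plus.
Qed.

Lemma path_deriv_vertical (c x : R) : path_deriv (fun y => (c, y)) x (0, 1).
Proof.
  rewrite path_deriv_iff; simpl; split.
  - apply derivable_pt_lim_const.
  - apply derivable_pt_lim_id.
Qed.

Lemma Cderiv_o (F : Cpx -> Cpx) (z L : Cpx) : Cderiv_at F z L ->
  forall e, 0 < e -> exists d, 0 < d /\ forall w, Cnorm (Csub w z) < d ->
    Cnorm (Csub (Csub (F w) (F z)) (Cmul L (Csub w z))) <= e * Cnorm (Csub w z).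
Proof.
  intros HF e He. destruct (HF e He) as [d [Hd Hw]]. exists d; split; auto.
  intros w Hwd. destruct (Req_dec (Cnorm (Csub w z)) 0) as [H0|H0].
  - assert (Ewz : w = z).
    { rewrite Cnorm_Cmod in H0; apply Cmod_eq_0 in H0. destruct w, z.
      injection H0; intros; apply injective_projections; simpl; lra. }
    subst w. replace (Csub (Csub (F z) (F z)) (Cmul L (Csub z z))) with Czero
      by cpx_ring.
    rewrite H0; unfold Cnorm, Czero; simpl.
    replace (0 * 0 + 0 * 0) with 0 by ring; rewrite sqrt_0; lra.
  - assert (Hnz : Csub w z <> Czero).
    { intro E; apply H0; rewrite E; unfold Cnorm, Czero; simpl.
      replace (0 * 0 + 0 * 0) with 0 by ring; apply sqrt_0. }
    pose proof (Cnorm_pos _ Hnz).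
    specialize (Hw w (conj H Hwd)).
    replace (Csub (Csub (F w) (F z)) (Cmul L (Csub w z))) with
      (Cmul (Csub (Cdiv (Csub (F w) (F z)) (Csub w z)) L) (Csub w z)).
    + rewrite Cnorm_mul. apply Rmult_le_compat_r; lra.
    + set (X := Csub (F w) (F z)) in *; set (Y := Csub w z) in *.
      transitivity (Csub (Cmul (Cdiv X Y) (Cmul Y Cone)) (Cmul L Y)); [cpx_ring|].
      rewrite (Cdiv_mul X Y Cone Hnz). cpx_ring.
Qed.

Lemma path_deriv_comp (F : Cpx -> Cpx) (p : R -> Cpx) (x : R) (v L : Cpx) :
  Cderiv_at F (p x) L -> path_deriv p x v ->
  path_deriv (fun y => F (p y)) x (Cmul L v).
Proof.
  intros HF Hp e He.
  set (M := Cnorm L). set (K := Cnorm v + 1).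
  assert (HM : 0 <= M) by apply Cnorm_ge0.
  assert (HK : 0 < K) by (pose proof (Cnorm_ge0 v); unfold K; lra).
  set (e1 := Rmin 1 (e / (2 * (M + 1)))).
  assert (He1 : 0 < e1) by (apply Rmin_pos; [lra | apply Rdiv_lt_0_compat; lra]).
  assert (He1M : M * e1 <= e / 2).
  { apply Rle_trans with (M * (e / (2 * (M + 1)))).
    - apply Rmult_le_compat_l; [lra | apply Rmin_r].
    - apply Rmult_le_reg_r with (2 * (M + 1)); [lra|].
      field_simplify; nra. }
  destruct (Hp e1 He1) as [d1 [Hd1 Bp]].
  destruct (Cderiv_o F (p x) L HF (e / (2 * K))) as [d2 [Hd2 BF]];
    [apply Rdiv_lt_0_compat; lra|].
  exists (Rmin d1 (d2 / K)); split; [apply Rmin_pos; [|apply Rdiv_lt_0_compat]; lra|].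
  intros h Hh. pose proof (Rabs_pos h) as Hh0.
  assert (Hh1 : Rabs h < d1) by exact (Rlt_le_trans _ _ _ Hh (Rmin_l _ _)).
  assert (Hh2 : K * Rabs h < d2).
  { pose proof (Rlt_le_trans _ _ _ Hh (Rmin_r _ _)) as H2.
    apply Rmult_lt_compat_l with (r := K) in H2; auto.
    replace (K * (d2 / K)) with d2 in H2 by (field; lra). exact H2. }
  specialize (Bp h Hh1).
  set (B := Csub (Csub (p (x + h)) (p x)) (Cmul (RtoC h) v)) in *.
  assert (Hstep : Cnorm (Csub (p (x + h)) (p x)) <= K * Rabs h).
  { replace (Csub (p (x + h)) (p x)) with (Cadd B (Cmul (RtoC h) v)) by (unfold B; cpx_ring).
    eapply Rle_trans; [apply Cnorm_add_le|].
    rewrite Cnorm_mul, Cnorm_RtoC. unfold K.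
    assert (e1 <= 1) by apply Rmin_l. nra. }
  specialize (BF (p (x + h)) (Rle_lt_trans _ _ _ Hstep Hh2)).
  set (A := Csub (Csub (F (p (x + h))) (F (p x))) (Cmul L (Csub (p (x + h)) (p x)))) in *.
  replace (Csub (Csub (F (p (x + h))) (F (p x))) (Cmul (RtoC h) (Cmul L v)))
    with (Cadd A (Cmul L B)) by (unfold A, B; cpx_ring).
  eapply Rle_trans; [apply Cnorm_add_le|]. rewrite Cnorm_mul. fold M.
  assert (e / (2 * K) * Cnorm (Csub (p (x + h)) (p x)) <= e / 2 * Rabs h).
  { apply Rle_trans with (e / (2 * K) * (K * Rabs h)).
    - apply Rmult_le_compat_l; [left; apply Rdiv_lt_0_compat|]; lra.
    - right; field; lra. }
  assert (M * Cnorm B <= e / 2 * Rabs h) by nra.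
  lra.
Qed.

Lemma strictly_increasing_of_pos_deriv (u : R -> R) :
  (forall x, exists l, 0 < l /\ derivable_pt_lim u x l) ->
  forall a b, a < b -> u a < u b.
Proof.
  intros Hu a b Hab.
  apply (incr_function u m_infty p_infty (fun x => Derive u x)); simpl; auto.
  - intros x _ _. destruct (Hu x) as [l [_ Hl]].
    apply Derive_correct. exists l. now apply is_derive_Reals.
  - intros x _ _. destruct (Hu x) as [l [Hl Hd]].
    apply is_derive_Reals, is_derive_unique in Hd. lra.
Qed.

(** The map phi(z) = z/(1-z) sends E onto the half-plane Re w > -1/2; its
    inverse, in Cartesian coordinates w = (c, s), is [zeta c s]. *)

Definition phi (z : Cpx) : Cpx := Cdiv z (Csub Cone z).

Definition zeta_den (c s : R) : R := (1 + c) * (1 + c) + s * s.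
Definition zeta (c s : R) : Cpx :=
  (1 - (1 + c) / zeta_den c s, s / zeta_den c s).

Lemma zeta_den_pos (c s : R) : -1/2 < c -> 0 < zeta_den c s.
Proof. intros; unfold zeta_den; nra. Qed.

Lemma phi_zeta (c s : R) : -1/2 < c -> phi (zeta c s) = (c, s).
Proof.
  intros Hc. pose proof (zeta_den_pos c s Hc) as HD.
  unfold phi, zeta, zeta_den, Cdiv, Cmul, Cinv, Csub, Cadd, Copp, Cone in *; simpl.
  f_equal; field; lra.
Qed.

Lemma zeta_inE (c s : R) : -1/2 < c -> inE (zeta c s).
Proof.
  intros Hc. pose proof (zeta_den_pos c s Hc) as HD. apply inE_iff.
  unfold zeta, zeta_den in *; simpl.
  replace ((1 - (1 + c) / ((1 + c) * (1 + c) + s * s)) * (1 - (1 + c) / ((1 + c) * (1 + c) + s * s)) +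
   s / ((1 + c) * (1 + c) + s * s) * (s / ((1 + c) * (1 + c) + s * s)))
   with ((c * c + s * s) / ((1 + c) * (1 + c) + s * s)) by (field; lra).
  apply Rmult_lt_reg_r with ((1 + c) * (1 + c) + s * s); auto.
  field_simplify; lra.
Qed.

Lemma zeta_onto (z : Cpx) : inE z -> exists c s, -1/2 < c /\ z = zeta c s.
Proof.
  intros Hz. apply inE_iff in Hz. destruct z as [x y]; simpl in Hz.
  assert (Hd : 0 < (1 - x) * (1 - x) + y * y) by nra.
  exists (fst (phi (x, y))), (snd (phi (x, y))).
  unfold phi, zeta, zeta_den, Cdiv, Cmul, Cinv, Csub, Cadd, Copp, Cone; simpl. split.
  - apply Rmult_lt_reg_r with ((1 + - x) * ((1 + - x) * 1) + (0 + - y) * ((0 + - y) * 1));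
      [nra|].
    field_simplify; nra.
  - f_equal; field; nra.
Qed.

Definition zeta_speed (c s : R) : Cpx :=
  (Derive (fun s => fst (zeta c s)) s, Derive (fun s => snd (zeta c s)) s).

Lemma zeta_vertical_deriv (c s : R) : -1/2 < c ->
  path_deriv (zeta c) s (zeta_speed c s).
Proof.
  intros Hc. pose proof (zeta_den_pos c s Hc) as HD.
  apply path_deriv_iff; unfold zeta_speed; simpl.
  split; apply is_derive_Reals, Derive_correct; unfold zeta, zeta_den in *; simpl;
    auto_derive; lra.
Qed.

Lemma zeta_horizontal_deriv (c s : R) : -1/2 < c ->
  exists v, path_deriv (fun x => zeta x s) c v.
Proof.
  intros Hc. pose proof (zeta_den_pos c s Hc) as HD.
  exists (Derive (fun x => fst (zeta x s)) c, Derive (fun x => snd (zeta x s)) c).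
  apply path_deriv_iff; simpl.
  split; apply is_derive_Reals, Derive_correct; unfold zeta, zeta_den in *; simpl;
    auto_derive; lra.
Qed.

(** If the velocities a = H V and b = G V add up to i,
    then |G/H| < 1 exactly when Im a > 1/2; the second condition is linear in
    (a, b), which is why it survives convex combinations. *)

Lemma dilatation_iff (a b : Cpx) :
  Cadd a b = (0, 1) -> (Cnorm b < Cnorm a <-> 1/2 < snd a).
Proof.
  intros E. injection E as E1 E2. rewrite Cnorm_lt_iff.
  replace (fst b) with (- fst a) by lra. replace (snd b) with (1 - snd a) by lra.
  split; intro; nra.
Qed.

Lemma speed_im_of_ratio (H G V : Cpx) :
  H <> Czero -> Cnorm (Cdiv G H) < 1 ->
  Cadd (Cmul H V) (Cmul G V) = (0, 1) -> 1/2 < snd (Cmul H V).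
Proof.
  intros HH Hr Hsum. apply (dilatation_iff _ _ Hsum).
  rewrite <- (Cdiv_mul G H V HH), Cnorm_mul.
  assert (HV : Cmul H V <> Czero).
  { intro E. rewrite <- (Cdiv_mul G H V HH), E in Hsum.
    unfold Cadd, Cmul, Czero in Hsum; simpl in Hsum. injection Hsum; lra. }
  pose proof (Cnorm_pos _ HV). pose proof (Cnorm_ge0 (Cdiv G H)). nra.
Qed.

Lemma ratio_of_speed_im (H G V : Cpx) :
  Cadd (Cmul H V) (Cmul G V) = (0, 1) -> 1/2 < snd (Cmul H V) ->
  H <> Czero /\ Cnorm (Cdiv G H) < 1.
Proof.
  intros Hsum Him.
  assert (HV : Cmul H V <> Czero).
  { intro E; rewrite E in Him; unfold Czero in Him; simpl in Him; lra. }
  assert (HH : H <> Czero).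
  { intro E; apply HV; rewrite E; cpx_ring. }
  split; auto.
  apply (dilatation_iff _ _ Hsum) in Him.
  rewrite <- (Cdiv_mul G H V HH), Cnorm_mul in Him.
  pose proof (Cnorm_pos _ HV). nra.
Qed.

Definition comb (t : R) (X Y : Cpx) : Cpx :=
  Cadd (Cmul (RtoC t) X) (Cmul (RtoC (1 - t)) Y).

Lemma convex_gt (t m a b : R) : 0 <= t <= 1 -> m < a -> m < b -> m < t * a + (1 - t) * b.
Proof.
  intros Ht Ha Hb. destruct (Rle_lt_dec a b).
  - assert (0 <= (1 - t) * (b - a)) by (apply Rmult_le_pos; lra). nra.
  - assert (0 <= t * (a - b)) by (apply Rmult_le_pos; lra). nra.
Qed.

Lemma Cnorm_comb_le (t : R) (X Y : Cpx) : 0 <= t <= 1 ->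
  Cnorm (comb t X Y) <= t * Cnorm X + (1 - t) * Cnorm Y.
Proof.
  intros Ht. unfold comb. eapply Rle_trans; [apply Cnorm_add_le|].
  rewrite !Cnorm_mul, !Cnorm_RtoC, !Rabs_right by lra. lra.
Qed.

Lemma Cderiv_comb (t : R) (F1 F2 : Cpx -> Cpx) (z L1 L2 : Cpx) : 0 <= t <= 1 ->
  Cderiv_at F1 z L1 -> Cderiv_at F2 z L2 ->
  Cderiv_at (fun w => comb t (F1 w) (F2 w)) z (comb t L1 L2).
Proof.
  intros Ht H1 H2 e He.
  destruct (H1 (e / 2)) as [d1 [Hd1 B1]]; [lra|].
  destruct (H2 (e / 2)) as [d2 [Hd2 B2]]; [lra|].
  exists (Rmin d1 d2); split; [apply Rmin_pos; auto|].
  intros w [Hw0 Hwd].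
  specialize (B1 w (conj Hw0 (Rlt_le_trans _ _ _ Hwd (Rmin_l _ _)))).
  specialize (B2 w (conj Hw0 (Rlt_le_trans _ _ _ Hwd (Rmin_r _ _)))).
  replace (Csub (Cdiv (Csub (comb t (F1 w) (F2 w)) (comb t (F1 z) (F2 z))) (Csub w z))
                (comb t L1 L2))
    with (comb t (Csub (Cdiv (Csub (F1 w) (F1 z)) (Csub w z)) L1)
                 (Csub (Cdiv (Csub (F2 w) (F2 z)) (Csub w z)) L2))
    by (unfold comb, Cdiv, Cinv; cpx_ring).
  eapply Rle_lt_trans; [apply Cnorm_comb_le; auto|].
  apply Rle_lt_trans with (t * (e / 2) + (1 - t) * (e / 2)); [|lra].
  apply Rplus_le_compat; apply Rmult_le_compat_l; lra.
Qed.

(** Shears of the half-plane map: h, g analytic in E with h' <> 0,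
    |g'/h'| < 1 and h + g = phi.  This is the situation of the theorem,
    before univalence and normalization are taken into account. *)

Definition shear_data (h g h' g' : Cpx -> Cpx) : Prop :=
  (forall z, inE z -> Cderiv_at h z (h' z) /\ Cderiv_at g z (g' z)) /\
  (forall z, inE z -> h' z <> Czero /\ Cnorm (Cdiv (g' z) (h' z)) < 1) /\
  (forall z, inE z -> Cadd (h z) (g z) = phi z).

Definition shear_map (h g : Cpx -> Cpx) (z : Cpx) : Cpx := Cadd (h z) (Cconj (g z)).

Definition shear_height (h g : Cpx -> Cpx) (c s : R) : R :=
  snd (h (zeta c s)) - snd (g (zeta c s)).

Section Shear.
Variables h g h' g' : Cpx -> Cpx.
Hypothesis Hshear : shear_data h g h' g'.

(* Along a vertical line of the half-plane, h and g move with velocities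
   h' V and g' V adding up to i, since h + g follows the line at unit speed. *)
Lemma shear_vertical_speeds (c s : R) : -1/2 < c ->
  let z := zeta c s in let V := zeta_speed c s in
  path_deriv (fun y => h (zeta c y)) s (Cmul (h' z) V) /\
  path_deriv (fun y => g (zeta c y)) s (Cmul (g' z) V) /\
  Cadd (Cmul (h' z) V) (Cmul (g' z) V) = (0, 1).
Proof.
  intros Hc z V. destruct Hshear as [HD [_ HP]].
  destruct (HD z (zeta_inE c s Hc)) as [Dh Dg].
  pose proof (path_deriv_comp h (zeta c) s _ _ Dh (zeta_vertical_deriv c s Hc)) as Ph.
  pose proof (path_deriv_comp g (zeta c) s _ _ Dg (zeta_vertical_deriv c s Hc)) as Pg.
  repeat split; auto.
  apply (path_deriv_unique (fun y => (c, y)) s); [|apply path_deriv_vertical].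
  apply (path_deriv_ext (fun y => Cadd (h (zeta c y)) (g (zeta c y)))).
  - intro y. rewrite HP by (apply zeta_inE; auto). now apply phi_zeta.
  - now apply path_deriv_add.
Qed.

Lemma shear_speed_im (c s : R) : -1/2 < c ->
  1/2 < snd (Cmul (h' (zeta c s)) (zeta_speed c s)).
Proof.
  intros Hc. destruct Hshear as [_ [HS _]].
  destruct (HS _ (zeta_inE c s Hc)) as [Hh Hr].
  destruct (shear_vertical_speeds c s Hc) as [_ [_ Hsum]].
  exact (speed_im_of_ratio _ _ _ Hh Hr Hsum).
Qed.

(* Re (h + conj g) = Re (h + g) = Re phi: the map h + conj g preserves the
   vertical lines of the parametrization, moving only along them. *)
Lemma shear_map_zeta (c s : R) : -1/2 < c ->
  shear_map h g (zeta c s) = (c, shear_height h g c s).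
Proof.
  intros Hc. destruct Hshear as [_ [_ HP]].
  pose proof (HP _ (zeta_inE c s Hc)) as E. rewrite phi_zeta in E by auto.
  unfold shear_map, shear_height, Cadd, Cconj; apply injective_projections; simpl.
  - change (fst (Cadd (h (zeta c s)) (g (zeta c s))) = c). now rewrite E.
  - ring.
Qed.

(* The height increases along each vertical line, with speed 2 Im(h' V) - 1 > 0. *)
Lemma shear_height_deriv (c s : R) : -1/2 < c ->
  exists l, 0 < l /\ derivable_pt_lim (shear_height h g c) s l.
Proof.
  intros Hc. pose proof (shear_speed_im c s Hc) as Him.
  destruct (shear_vertical_speeds c s Hc) as [Ph [Pg Hsum]].
  apply path_deriv_iff in Ph as [_ Ph]. apply path_deriv_iff in Pg as [_ Pg].
  remember (Cmul (h' (zeta c s)) (zeta_speed c s)) as a.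
  remember (Cmul (g' (zeta c s)) (zeta_speed c s)) as b.
  destruct a as [a1 a2], b as [b1 b2]. injection Hsum as _ Hsum. simpl in *.
  eexists; split; [|exact (derivable_pt_lim_minus _ _ s _ _ Ph Pg)]. lra.
Qed.

Lemma shear_height_incr (c : R) : -1/2 < c ->
  forall s1 s2, s1 < s2 -> shear_height h g c s1 < shear_height h g c s2.
Proof.
  intros Hc. apply strictly_increasing_of_pos_deriv. intro s.
  now apply shear_height_deriv.
Qed.

Lemma shear_height_cont_s (c : R) : -1/2 < c -> continuity (shear_height h g c).
Proof.
  intros Hc s. destruct (shear_height_deriv c s Hc) as [l [_ Hl]].
  apply derivable_continuous_pt. now exists l.
Qed.

Lemma shear_height_cont_c (c s : R) : -1/2 < c ->
  continuity_pt (fun x => shear_height h g x s) c.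
Proof.
  intros Hc. destruct Hshear as [HD _].
  destruct (zeta_horizontal_deriv c s Hc) as [v Hv].
  destruct (HD _ (zeta_inE c s Hc)) as [Dh Dg].
  pose proof (path_deriv_comp h (fun x => zeta x s) c _ _ Dh Hv) as Ph.
  pose proof (path_deriv_comp g (fun x => zeta x s) c _ _ Dg Hv) as Pg.
  apply path_deriv_iff in Ph as [_ Ph]. apply path_deriv_iff in Pg as [_ Pg].
  apply derivable_continuous_pt. eexists.
  exact (derivable_pt_lim_minus _ _ c _ _ Ph Pg).
Qed.

End Shear.

(* Shears of phi form a convex set: the velocity condition Im(h' V) > 1/2 of
   [shear_speed_im] is preserved by convex combinations. *)
Lemma shear_data_comb (t : R) (h1 g1 h1' g1' h2 g2 h2' g2' : Cpx -> Cpx) :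
  0 <= t <= 1 -> shear_data h1 g1 h1' g1' -> shear_data h2 g2 h2' g2' ->
  shear_data (fun z => comb t (h1 z) (h2 z)) (fun z => comb t (g1 z) (g2 z))
             (fun z => comb t (h1' z) (h2' z)) (fun z => comb t (g1' z) (g2' z)).
Proof.
  intros Ht S1 S2. pose proof S1 as [HD1 [_ HP1]]. pose proof S2 as [HD2 [_ HP2]].
  split; [|split].
  - intros z Hz. destruct (HD1 z Hz), (HD2 z Hz). split; now apply Cderiv_comb.
  - intros z Hz. destruct (zeta_onto z Hz) as [c [s [Hc ->]]].
    set (V := zeta_speed c s).
    destruct (shear_vertical_speeds _ _ _ _ S1 c s Hc) as [_ [_ E1]].
    destruct (shear_vertical_speeds _ _ _ _ S2 c s Hc) as [_ [_ E2]].
    pose proof (shear_speed_im _ _ _ _ S1 c s Hc) as I1.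
    pose proof (shear_speed_im _ _ _ _ S2 c s Hc) as I2.
    fold V in E1, E2, I1, I2.
    apply (ratio_of_speed_im _ _ V).
    + replace (Cadd (Cmul (comb t (h1' (zeta c s)) (h2' (zeta c s))) V)
                    (Cmul (comb t (g1' (zeta c s)) (g2' (zeta c s))) V))
        with (comb t (Cadd (Cmul (h1' (zeta c s)) V) (Cmul (g1' (zeta c s)) V))
                     (Cadd (Cmul (h2' (zeta c s)) V) (Cmul (g2' (zeta c s)) V)))
        by (unfold comb; cpx_ring).
      rewrite E1, E2. unfold comb; cpx_ring.
    + replace (snd (Cmul (comb t (h1' (zeta c s)) (h2' (zeta c s))) V))
        with (t * snd (Cmul (h1' (zeta c s)) V) + (1 - t) * snd (Cmul (h2' (zeta c s)) V))
        by (unfold comb, Cadd, Cmul, RtoC; simpl; ring).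
      now apply convex_gt.
  - intros z Hz.
    replace (Cadd (comb t (h1 z) (h2 z)) (comb t (g1 z) (g2 z)))
      with (comb t (Cadd (h1 z) (g1 z)) (Cadd (h2 z) (g2 z))) by (unfold comb; cpx_ring).
    rewrite HP1, HP2 by auto. unfold comb; cpx_ring.
Qed.

Definition separation (S U V : Cpx -> Prop) : Prop :=
  Copen U /\ Copen V /\ (forall z, S z -> U z \/ V z) /\
  (forall z, S z -> ~ (U z /\ V z)).

Definition path_in (S : Cpx -> Prop) (g : R -> Cpx) (p q : R) : Prop :=
  p <= q /\ (forall x, p <= x <= q -> S (g x)) /\
  (forall x, p <= x <= q -> forall e, 0 < e -> exists d, 0 < d /\
     forall y, p <= y <= q -> Rabs (y - x) < d -> Cnorm (Csub (g y) (g x)) < e).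

Definition clamp (p q x : R) : R := Rmax p (Rmin q x).

Lemma clamp_in (p q x : R) : p <= q -> p <= clamp p q x <= q.
Proof. intros. unfold clamp, Rmax, Rmin; repeat destruct Rle_dec; lra. Qed.

Lemma clamp_id (p q x : R) : p <= x <= q -> clamp p q x = x.
Proof. intros. unfold clamp, Rmax, Rmin; repeat destruct Rle_dec; lra. Qed.

Lemma clamp_lip (p q x y : R) : p <= q -> Rabs (clamp p q y - clamp p q x) <= Rabs (y - x).
Proof. intros. unfold clamp, Rmax, Rmin; repeat destruct Rle_dec; split_Rabs; lra. Qed.

(* A path cannot leave one part of a separation for the other: the indicator
   of [U] along the (clamped) path is locally constant, hence constant by the
   intermediate value theorem. *)
Lemma path_not_separated (S U V : Cpx -> Prop) (g : R -> Cpx) (p q : R) :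
  separation S U V -> path_in S g p q -> U (g p) -> V (g q) -> False.
Proof.
  intros [HU [HV [Hcov Hdis]]] [Hpq [HS Hc]] Up Vq.
  set (chi := fun x => if excluded_middle_informative (U (g (clamp p q x))) then -1 else 1).
  assert (Hstay : forall x (W : Cpx -> Prop), Copen W -> W (g (clamp p q x)) ->
            exists d, 0 < d /\ forall y, Rabs (y - x) < d -> W (g (clamp p q y))).
  { intros x W HW Wx. pose proof (clamp_in p q x Hpq) as Hx.
    destruct (HW _ Wx) as [r [Hr Hb]]. destruct (Hc _ Hx r Hr) as [d [Hd Hy]].
    exists d; split; auto. intros y Hyx. apply Hb, Hy; [apply clamp_in; auto|].
    eapply Rle_lt_trans; [apply clamp_lip; auto | exact Hyx]. }
  assert (Hloc : forall x, exists d, 0 < d /\ forall y, Rabs (y - x) < d -> chi y = chi x).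
  { intro x. pose proof (HS _ (clamp_in p q x Hpq)) as Sx.
    assert (Sy : forall y, S (g (clamp p q y))) by (intro y; apply HS, clamp_in; auto).
    unfold chi.
    destruct (Hcov _ Sx) as [Ux|Vx];
      [destruct (Hstay x U HU Ux) as [d [Hd Hy]] | destruct (Hstay x V HV Vx) as [d [Hd Hy]]];
      exists d; split; auto; intros y Hyx; specialize (Hy y Hyx);
      destruct excluded_middle_informative as [A|A];
      destruct excluded_middle_informative as [B|B]; auto; exfalso;
      solve [ apply A; auto | apply B; auto | apply (Hdis _ (Sy y)); split; auto
             | apply (Hdis _ Sx); split; auto ]. }
  assert (Hcont : continuity chi).
  { intros x eps Heps. destruct (Hloc x) as [d [Hd Hy]].
    exists d; split; auto. intros y [_ Hyx]. simpl in *; unfold R_dist in *.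
    rewrite (Hy y Hyx). unfold Rminus; rewrite Rplus_opp_r, Rabs_R0; auto. }
  assert (Sp : S (g p)) by (apply HS; lra). assert (Sq : S (g q)) by (apply HS; lra).
  destruct (Req_dec p q) as [<-|Hne]; [apply (Hdis _ Sp); auto|].
  assert (Cp : chi p = -1).
  { unfold chi. rewrite clamp_id by lra. destruct excluded_middle_informative; tauto. }
  assert (Cq : chi q = 1).
  { unfold chi. rewrite clamp_id by lra.
    destruct excluded_middle_informative as [A|A]; auto. exfalso; apply (Hdis _ Sq); auto. }
  destruct (IVT chi p q Hcont ltac:(lra) ltac:(lra) ltac:(lra)) as [x [_ Hx]].
  unfold chi in Hx. destruct excluded_middle_informative in Hx; lra.
Qed.

Definition joined (S : Cpx -> Prop) (a b : Cpx) : Prop :=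
  exists g p q, path_in S g p q /\ ((g p = a /\ g q = b) \/ (g p = b /\ g q = a)).

Lemma joined_in (S : Cpx -> Prop) (a b : Cpx) : joined S a b -> S a /\ S b.
Proof.
  intros [g [p [q [[Hpq [HS _]] E]]]].
  assert (S (g p)) by (apply HS; lra). assert (S (g q)) by (apply HS; lra).
  destruct E as [[<- <-]|[<- <-]]; auto.
Qed.

Lemma joined_not_separated (S U V : Cpx -> Prop) (a b : Cpx) :
  separation S U V -> joined S a b -> U a -> V b -> False.
Proof.
  intros Hsep [g [p [q [Hpath [[Ea Eb]|[Eb Ea]]]]]] Ua Vb; subst.
  - exact (path_not_separated S U V g p q Hsep Hpath Ua Vb).
  - destruct Hsep as [HU [HV [Hcov Hdis]]].
    refine (path_not_separated S V U g p q _ Hpath Vb Ua).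
    repeat split; auto.
    + intros z Sz; destruct (Hcov z Sz); tauto.
    + intros z Sz [A B]; apply (Hdis z Sz); tauto.
Qed.

Lemma Cconnected_of_joined (S : Cpx -> Prop) :
  (forall a b, S a -> S b -> exists m, joined S a m /\ joined S m b) -> Cconnected S.
Proof.
  intros Hj [U [V [HU [HV [Hcov [[a [Sa Ua]] [[b [Sb Vb]] Hdis]]]]]]].
  assert (Hsep : separation S U V) by (repeat split; auto).
  destruct (Hj a b Sa Sb) as [m [Jam Jmb]].
  destruct (Hcov m (proj2 (joined_in _ _ _ Jam))) as [Um|Vm].
  - exact (joined_not_separated S U V m b Hsep Jmb Um Vb).
  - exact (joined_not_separated S U V a m Hsep Jam Ua Vm).
Qed.

Lemma continuity_pt_eps (u : R -> R) (x : R) : continuity_pt u x ->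
  forall e, 0 < e -> exists d, 0 < d /\ forall y, Rabs (y - x) < d -> Rabs (u y - u x) < e.
Proof.
  intros H e He. destruct (H e He) as [d [Hd Hy]]. exists d; split; auto.
  intros y Hyd. destruct (Req_dec x y) as [<-|Hne].
  - rewrite Rminus_diag, Rabs_R0; auto.
  - apply Hy. repeat split; auto.
Qed.

Lemma path_in_coords (S : Cpx -> Prop) (u v : R -> R) (p q : R) : p <= q ->
  (forall x, p <= x <= q -> S (u x, v x)) ->
  (forall x, p <= x <= q -> continuity_pt u x /\ continuity_pt v x) ->
  path_in S (fun x => (u x, v x)) p q.
Proof.
  intros Hpq HS Hc. repeat split; auto.
  intros x Hx e He. destruct (Hc x Hx) as [Cu Cv].
  destruct (continuity_pt_eps u x Cu (e / 2)) as [d1 [Hd1 B1]]; [lra|].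
  destruct (continuity_pt_eps v x Cv (e / 2)) as [d2 [Hd2 B2]]; [lra|].
  exists (Rmin d1 d2); split; [apply Rmin_pos; auto|]. intros y _ Hyx.
  specialize (B1 y (Rlt_le_trans _ _ _ Hyx (Rmin_l _ _))).
  specialize (B2 y (Rlt_le_trans _ _ _ Hyx (Rmin_r _ _))).
  eapply Rle_lt_trans; [apply Cnorm_le_abs|]. simpl. unfold Rminus in *. lra.
Qed.

Lemma joined_of_coords (S : Cpx -> Prop) (u v : R -> R) (p q : R) :
  (forall x, Rmin p q <= x <= Rmax p q ->
     S (u x, v x) /\ continuity_pt u x /\ continuity_pt v x) ->
  joined S (u p, v p) (u q, v q).
Proof.
  intros H. exists (fun x => (u x, v x)).
  destruct (Rle_dec p q) as [Hpq|Hpq].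
  - rewrite Rmin_left, Rmax_right in H by lra.
    exists p, q; split; [apply path_in_coords; auto; apply H | left; auto].
  - rewrite Rmin_right, Rmax_left in H by lra.
    exists q, p; split; [apply path_in_coords; try lra; apply H | right; auto].
Qed.

Lemma joined_mono (S T : Cpx -> Prop) (a b : Cpx) :
  (forall z, S z -> T z) -> joined S a b -> joined T a b.
Proof.
  intros HST [g [p [q [[Hpq [HS Hc]] E]]]].
  exists g, p, q; repeat split; auto.
Qed.

Lemma value_between (u : R -> R) (a b y : R) :
  continuity u -> a < b -> u a < y < u b -> exists s, y = u s.
Proof.
  intros Hu Hab Hy.
  destruct (IVT (fun s => u s - y) a b) as [s [_ Hs]]; try lra.
  - apply continuity_minus; auto. intro x. apply derivable_continuous_pt, derivable_pt_const.
  - exists s; lra.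
Qed.

Section SweptRegion.
Variable Q : R -> R -> R.
Hypothesis Q_incr : forall c, -1/2 < c -> forall s1 s2, s1 < s2 -> Q c s1 < Q c s2.
Hypothesis Q_cont_s : forall c, -1/2 < c -> continuity (Q c).
Hypothesis Q_cont_c : forall c s, -1/2 < c -> continuity_pt (fun x => Q x s) c.

Definition swept_region (w : Cpx) : Prop := -1/2 < fst w /\ exists s, snd w = Q (fst w) s.

(* Near a point of height Q c0 s0, the heights Q c (s0 - 1) and Q c (s0 + 1)
   still bracket every nearby height, which is then attained on line c. *)
Lemma swept_region_open : Copen swept_region.
Proof.
  intros [c0 y0] [Hc0 [s0 Hy0]]; simpl in *.
  set (y1 := Q c0 (s0 - 1)). set (y2 := Q c0 (s0 + 1)).
  assert (L1 : y1 < y0) by (rewrite Hy0; apply Q_incr; lra).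
  assert (L2 : y0 < y2) by (rewrite Hy0; apply Q_incr; lra).
  set (m := Rmin (y0 - y1) (y2 - y0)).
  assert (Hm : 0 < m) by (apply Rmin_pos; lra).
  assert (m <= y0 - y1) by apply Rmin_l. assert (m <= y2 - y0) by apply Rmin_r.
  destruct (continuity_pt_eps _ _ (Q_cont_c c0 (s0 - 1) Hc0) (m / 2)) as [d1 [Hd1 C1]]; [lra|].
  destruct (continuity_pt_eps _ _ (Q_cont_c c0 (s0 + 1) Hc0) (m / 2)) as [d2 [Hd2 C2]]; [lra|].
  exists (Rmin (Rmin d1 d2) (Rmin (c0 + 1/2) (m / 2))).
  split; [repeat apply Rmin_pos; lra|]. intros [c y] Hw.
  replace (Csub (c, y) (c0, y0)) with (c - c0, y - y0) in Hw by cpx_ring.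
  pose proof (Rabs_fst_le (c - c0, y - y0)) as R1.
  pose proof (Rabs_snd_le (c - c0, y - y0)) as R2. simpl in R1, R2.
  pose proof (Rmin_l (Rmin d1 d2) (Rmin (c0 + 1/2) (m / 2))).
  pose proof (Rmin_r (Rmin d1 d2) (Rmin (c0 + 1/2) (m / 2))).
  pose proof (Rmin_l d1 d2). pose proof (Rmin_r d1 d2).
  pose proof (Rmin_l (c0 + 1/2) (m / 2)). pose proof (Rmin_r (c0 + 1/2) (m / 2)).
  specialize (C1 c ltac:(lra)). specialize (C2 c ltac:(lra)).
  assert (Hc : -1/2 < c) by (revert R1; split_Rabs; lra).
  split; simpl; auto.
  apply (value_between (Q c) (s0 - 1) (s0 + 1)); auto; [lra|].
  fold y1 y2 in C1, C2. revert C1 C2 R2; split_Rabs; lra.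
Qed.

Lemma swept_vertical_joined (c s1 s2 : R) : -1/2 < c ->
  joined (fun w => swept_region w /\ Re w = c) (c, Q c s1) (c, Q c s2).
Proof.
  intros Hc. apply (joined_of_coords _ (fun _ => c) (Q c)). intros x _.
  repeat split; simpl; eauto.
  - apply derivable_continuous_pt, derivable_pt_const.
  - now apply Q_cont_s.
Qed.

Lemma swept_horizontal_joined (c1 c2 s : R) : -1/2 < c1 -> -1/2 < c2 ->
  joined swept_region (c1, Q c1 s) (c2, Q c2 s).
Proof.
  intros H1 H2. apply (joined_of_coords _ (fun x => x) (fun x => Q x s)). intros x Hx.
  assert (Hx' : -1/2 < x) by (unfold Rmin in Hx; destruct Rle_dec in Hx; lra).
  repeat split; simpl; eauto.
  apply derivable_continuous_pt, derivable_pt_id.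
Qed.

Lemma swept_region_connected : Cconnected swept_region.
Proof.
  apply Cconnected_of_joined. intros [ca ya] [cb yb] [Ha [sa Ea]] [Hb [sb Eb]].
  simpl in *; subst ya yb. exists (cb, Q cb sa). split.
  - now apply swept_horizontal_joined.
  - apply (joined_mono (fun w => swept_region w /\ Re w = cb)); [tauto|].
    now apply swept_vertical_joined.
Qed.

Lemma swept_region_convex_imag : convex_imag_dir swept_region.
Proof.
  intros c. apply Cconnected_of_joined.
  intros [ca ya] [cb yb] [[Ha [sa Ea]] Ra] [[Hb [sb Eb]] Rb].
  unfold Re in Ra, Rb; simpl in *; subst ya yb ca cb.
  exists (c, Q c sb). split; now apply swept_vertical_joined.
Qed.

End SweptRegion.

Section ShearImage.
Variables h g h' g' : Cpx -> Cpx.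
Hypothesis Hshear : shear_data h g h' g'.

(* h + conj g is injective on E: it preserves each vertical line of the
   parametrization and is strictly monotone along it. *)
Lemma shear_map_injective (z w : Cpx) :
  inE z -> inE w -> shear_map h g z = shear_map h g w -> z = w.
Proof.
  intros Hz Hw E.
  destruct (zeta_onto z Hz) as [c1 [s1 [H1 ->]]].
  destruct (zeta_onto w Hw) as [c2 [s2 [H2 ->]]].
  rewrite !(shear_map_zeta _ _ _ _ Hshear) in E by auto. injection E as <- Es.
  destruct (Rtotal_order s1 s2) as [L|[<-|L]]; auto;
    pose proof (shear_height_incr _ _ _ _ Hshear c1 H1 _ _ L); lra.
Qed.

Lemma shear_map_image : image_E (shear_map h g) = swept_region (shear_height h g).
Proof.
  extensionality w. apply propositional_extensionality. split.
  - intros [z [Hz ->]]. destruct (zeta_onto z Hz) as [c [s [Hc ->]]].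
    rewrite (shear_map_zeta _ _ _ _ Hshear) by auto. split; simpl; eauto.
  - intros [Hc [s Hs]]. exists (zeta (fst w) s). split; [now apply zeta_inE|].
    rewrite (shear_map_zeta _ _ _ _ Hshear) by auto. rewrite <- Hs. now destruct w.
Qed.

Theorem shear_image_shape :
  domain (image_E (shear_map h g)) /\ convex_imag_dir (image_E (shear_map h g)).
Proof.
  rewrite shear_map_image.
  pose proof (shear_height_incr _ _ _ _ Hshear) as Hincr.
  pose proof (shear_height_cont_s _ _ _ _ Hshear) as Hcs.
  pose proof (shear_height_cont_c _ _ _ _ Hshear) as Hcc.
  split; [split|].
  - now apply swept_region_open.
  - now apply swept_region_connected.
  - now apply swept_region_convex_imag.
Qed.

(* A shear of phi normalized at 0 belongs to S_H: univalence is not an extra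
   assumption but follows from [shear_map_injective]. *)
Theorem SH_data_of_shear :
  Cadd (h Czero) (Cconj (g Czero)) = Czero -> h' Czero = Cone -> SH_data h g.
Proof.
  intros H0 H1. destruct Hshear as [HD [HS _]].
  exists h', g'. repeat split; auto.
  - apply HD; auto.
  - apply HD; auto.
  - apply HS; auto.
  - apply HS; auto.
  - exact shear_map_injective.
Qed.

End ShearImage.

Lemma shear_of_SH_data (h g : Cpx -> Cpx) :
  SH_data h g -> (forall z, inE z -> Cadd (h z) (g z) = phi z) ->
  exists h' g', shear_data h g h' g' /\
    Cadd (h Czero) (Cconj (g Czero)) = Czero /\ h' Czero = Cone.
Proof.
  intros [h' [g' [HD [HS [_ [HN HO]]]]]] HP.
  exists h', g'. split; [split; [|split]|]; auto.
Qed.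

Theorem corollary2p4 (h1 g1 h2 g2 : Cpx -> Cpx) (t : R) :
  SH_data h1 g1 -> SH_data h2 g2 ->
  (forall z, inE z -> Cadd (h1 z) (g1 z) = Cdiv z (Csub Cone z)) ->
  (forall z, inE z -> Cadd (h2 z) (g2 z) = Cdiv z (Csub Cone z)) ->
  0 <= t <= 1 ->
  let f := fun z => Cadd (Cmul (RtoC t) (Cadd (h1 z) (Cconj (g1 z))))
                         (Cmul (RtoC (1 - t)) (Cadd (h2 z) (Cconj (g2 z)))) in
  in_SH f /\ domain (image_E f) /\ convex_imag_dir (image_E f).
Proof.
  intros SH1 SH2 HP1 HP2 Ht f.
  destruct (shear_of_SH_data h1 g1 SH1 HP1) as [h1' [g1' [Sh1 [HN1 HO1]]]].
  destruct (shear_of_SH_data h2 g2 SH2 HP2) as [h2' [g2' [Sh2 [HN2 HO2]]]].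
  set (h := fun z => comb t (h1 z) (h2 z)). set (g := fun z => comb t (g1 z) (g2 z)).
  pose proof (shear_data_comb t _ _ _ _ _ _ _ _ Ht Sh1 Sh2) as Hsh.
  assert (Hf : f = shear_map h g).
  { extensionality z. unfold f, shear_map, h, g, comb. cpx_ring. }
  rewrite Hf. split; [|exact (shear_image_shape _ _ _ _ Hsh)].
  exists h, g. split; [|reflexivity].
  apply (SH_data_of_shear _ _ _ _ Hsh).
  - transitivity (comb t (Cadd (h1 Czero) (Cconj (g1 Czero)))
                          (Cadd (h2 Czero) (Cconj (g2 Czero)))).
    + unfold h, g, comb. cpx_ring.
    + rewrite HN1, HN2. unfold comb. cpx_ring.
  - unfold comb. rewrite HO1, HO2. cpx_ring.
Qed.
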